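(* Let $0<\delta<1$, $t>1$, $\lambda_c:=1/(t^{1-\delta}-1)$, $\lambda_c\le\lambda\le t^{1-\delta}-1$, write $\lambda=\lambda_c(1+\Lambda)$ and $\omega:=\sqrt{\frac{\lambda_c t}{2}}\frac{\ln(1+\Lambda)}{1+\lambda_c}$. Let $a=a(t)$ satisfy $t^{-\delta/2}\ll a\ll t^{-\delta/3}$, set $k:=t^{\delta-1}(1-a)$, and let $$J_{B1}(t;\lambda):=\int_{1-t^{\delta-1}}^{1-k}(1-z)^{-1/2}{\rm e}^{{\rm i} tF(z;\lambda)}\,{\rm d} z.$$ Then, as $t\to\infty$, $$J_{B1}(t;\lambda)=\exp\!\big({\rm i} tF(1-t^{\delta-1};\lambda)-{\rm i}\omega^2\big)\,t^{-1/2}\sqrt{\frac{2}{1+\lambda_c}}\left(\int_\omega^{\omega+a\sqrt{\lambda_c t/2}}{\rm e}^{{\rm i}\xi^2}\,{\rm d}\xi\right)+{\cal O}\!\left(t^{-\frac12+\frac{3\delta}{2}}a^4\right).$$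
   Context: $F(z;\lambda):=(1-z)\ln(1-z)+z\ln z+z\ln\lambda$ with branch cuts $(-\infty,0]$ and $[1,\infty)$; the integral defining $J_{B1}$ is along the real segment. $f\ll g$ means $f/g\to0$ as $t\to\infty$. *)

From Stdlib Require Import Reals.
From Coquelicot Require Import Coquelicot.
Open Scope R_scope.

Definition Fphase (z lam : R) : R :=
  (1 - z) * ln (1 - z) + z * ln z + z * ln lam.

Definition cexpi (theta : R) : C := (cos theta, sin theta).

Definition CRInt (f : R -> C) (a b : R) : C :=
  (RInt (fun x => fst (f x)) a b, RInt (fun x => snd (f x)) a b).

Definition lam_c (delta t : R) : R := 1 / (Rpower t (1 - delta) - 1).

(* omega := sqrt(lambda_c t / 2) * ln(1+Lambda)/(1+lambda_c), lambda = lambda_c (1+Lambda) *)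
Definition omega (delta t lam : R) : R :=
  sqrt (lam_c delta t * t / 2) * ln (lam / lam_c delta t) / (1 + lam_c delta t).

Definition J_B1 (delta t lam a : R) : C :=
  let k := Rpower t (delta - 1) * (1 - a) in
  CRInt (fun z => Cmult (RtoC (/ sqrt (1 - z))) (cexpi (t * Fphase z lam)))
        (1 - Rpower t (delta - 1)) (1 - k).

Definition J_main (delta t lam a : R) : C :=
  let w := omega delta t lam in
  Cmult (cexpi (t * Fphase (1 - Rpower t (delta - 1)) lam - w ^ 2))
   (Cmult (RtoC (Rpower t (-1/2) * sqrt (2 / (1 + lam_c delta t))))
     (CRInt (fun xi => cexpi (xi ^ 2)) w (w + a * sqrt (lam_c delta t * t / 2)))).

(* Write e := t^(delta-1), z0 := 1 - e, z1 := 1 - k, so z1 - z0 = a e.  On [z0, z1] the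
   amplitude (1 - z)^(-1/2) stays within 2a/sqrt e of its value at z0, and F'' = 1/z + 1/(1 - z)
   satisfies |F''(z) - F''(z0)| <= (2/e^2)(z - z0), so tF differs from its second-order Taylor
   polynomial at z0 by at most 2 t a^3 e.  Completing the square writes that polynomial as
   tF(z0) - omega^2 + xi^2 with xi = beta (z - z0) + omega and beta^2 = tF''(z0)/2; since
   F'(z0) = ln(lambda/lambda_c), this omega is the one of the statement, and the substitution
   z -> xi turns the model integral into the Fresnel integral over
   [omega, omega + a sqrt(lambda_c t / 2)].  Integrating both errors over [z0, z1] gives
   O(a^2 sqrt e + t a^4 e sqrt e); the first term is dominated by the second as soon as
   t e a^2 = t^delta a^2 >= 1, which is what t^(-delta/2) << a provides, while a << t^(-delta/3)
   is only used to keep a <= 1/2.  Only F'', which does not depend on lambda, enters the error. *)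

From Stdlib Require Import Reals Psatz.
From Coquelicot Require Import Coquelicot.
Open Scope R_scope.

Lemma Rabs_sub_le_of_derive_bound (f df : R -> R) (K x y : R) :
  x <= y ->
  (forall c, x <= c <= y -> is_derive f c (df c)) ->
  (forall c, x <= c <= y -> Rabs (df c) <= K) ->
  Rabs (f y - f x) <= K * (y - x).
Proof.
  intros Hxy Hd Hb.
  destruct (MVT_abs f df x y) as [c [-> Hc]].
  - intros c Hc; apply is_derive_Reals, Hd.
    now rewrite Rmin_left, Rmax_right in Hc by lra.
  - rewrite Rmin_left, Rmax_right in Hc by lra.
    rewrite (Rabs_right (y - x)) by lra.
    apply Rmult_le_compat_r; [lra | now apply Hb].
Qed.

Lemma taylor2_remainder_le (f df d2f : R -> R) (x0 x1 M : R) :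
  (forall x, x0 <= x <= x1 -> is_derive f x (df x)) ->
  (forall x, x0 <= x <= x1 -> is_derive df x (d2f x)) ->
  (forall x, x0 <= x <= x1 -> Rabs (d2f x - d2f x0) <= M * (x - x0)) ->
  forall x, x0 <= x <= x1 ->
  Rabs (f x - (f x0 + df x0 * (x - x0) + d2f x0 * (x - x0) ^ 2 / 2))
    <= M * (x - x0) ^ 3.
Proof.
  intros Hf Hdf Hlip x Hx.
  destruct (Req_dec x x0) as [-> | Hne].
  { replace (x0 - x0) with 0 by ring.
    rewrite Rabs_right by (simpl; lra); simpl; lra. }
  assert (HM : 0 <= M).
  { specialize (Hlip x Hx); pose proof (Rabs_pos (d2f x - d2f x0)); nra. }
  set (g1 y := df y - df x0 - d2f x0 * (y - x0)).
  assert (Hg1 : forall y, x0 <= y <= x -> Rabs (g1 y) <= M * (x - x0) * (y - x0)).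
  { intros y Hy.
    replace (g1 y) with (g1 y - g1 x0) by (unfold g1; ring).
    apply (Rabs_sub_le_of_derive_bound g1 (fun c => d2f c - d2f x0)); [lra | |].
    - intros c Hc; unfold g1.
      auto_derive; [exists (d2f c); apply Hdf; lra |].
      replace (Derive (fun y => df y) c) with (d2f c)
        by (symmetry; apply is_derive_unique, Hdf; lra).
      ring.
    - intros c Hc; eapply Rle_trans; [apply Hlip; lra |].
      apply Rmult_le_compat_l; lra. }
  set (g y := f y - (f x0 + df x0 * (y - x0) + d2f x0 * (y - x0) ^ 2 / 2)).
  change (Rabs (g x) <= M * (x - x0) ^ 3).
  replace (g x) with (g x - g x0) by (unfold g; field).
  replace (M * (x - x0) ^ 3) with (M * (x - x0) ^ 2 * (x - x0)) by ring.
  apply (Rabs_sub_le_of_derive_bound g g1); [lra | |].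
  - intros c Hc; unfold g, g1.
    auto_derive; [exists (df c); apply Hf; lra |].
    replace (Derive (fun y => f y) c) with (df c)
      by (symmetry; apply is_derive_unique, Hf; lra).
    field.
  - intros c Hc; eapply Rle_trans; [apply Hg1; exact Hc |].
    replace (M * (x - x0) ^ 2) with (M * (x - x0) * (x - x0)) by ring.
    apply Rmult_le_compat_l; nra.
Qed.

Lemma Rabs_sin_le (x : R) : Rabs (sin x) <= Rabs x.
Proof.
  destruct (MVT_abs sin cos 0 x) as [c [E _]].
  { intros c _; apply derivable_pt_lim_sin. }
  rewrite sin_0, !Rminus_0_r in E; rewrite E.
  rewrite <- (Rmult_1_l (Rabs x)) at 2.
  apply Rmult_le_compat_r; [apply Rabs_pos | apply Rabs_le, COS_bound].
Qed.

Lemma Cmod_cexpi (x : R) : Cmod (cexpi x) = 1.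
Proof.
  unfold Cmod, cexpi; simpl.
  rewrite !Rmult_1_r, Rplus_comm, <- !Rsqr_def, sin2_cos2; apply sqrt_1.
Qed.

(* |e^{iP} - e^{iQ}|^2 = 2 - 2 cos (P - Q) = 4 sin^2 ((P - Q) / 2) *)
Lemma Cmod_cexpi_sub_le (P Q : R) : Cmod (cexpi P - cexpi Q) <= Rabs (P - Q).
Proof.
  unfold Cmod, cexpi; simpl.
  rewrite <- sqrt_Rsqr_abs.
  apply sqrt_le_1_alt.
  set (h := (P - Q) / 2).
  assert (Hcos : cos P * cos Q + sin P * sin Q = 1 - 2 * sin h * sin h).
  { rewrite <- cos_minus, <- cos_2a_sin; f_equal; unfold h; field. }
  assert (Hh : Rsqr (sin h) <= Rsqr h).
  { apply Rsqr_le_abs_1, Rabs_sin_le. }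
  pose proof (sin2_cos2 P); pose proof (sin2_cos2 Q).
  replace (Rsqr (P - Q)) with (4 * Rsqr h) by (unfold h, Rsqr; field).
  unfold Rsqr in *; nra.
Qed.

Lemma Cmod_scal_cexpi_sub_le (A B P Q : R) :
  Cmod (RtoC A * cexpi P - RtoC B * cexpi Q) <= Rabs (A - B) + Rabs B * Rabs (P - Q).
Proof.
  replace (RtoC A * cexpi P - RtoC B * cexpi Q)%C
    with (RtoC (A - B) * cexpi P + RtoC B * (cexpi P - cexpi Q))%C
    by (rewrite RtoC_minus; ring).
  eapply Rle_trans; [apply Cmod_triangle |].
  rewrite !Cmod_mult, !Cmod_R, Cmod_cexpi, Rmult_1_r.
  apply Rplus_le_compat_l, Rmult_le_compat_l; [apply Rabs_pos | apply Cmod_cexpi_sub_le].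
Qed.

Definition ex_CRInt (f : R -> C) (a b : R) : Prop :=
  ex_RInt (fun x => fst (f x)) a b /\ ex_RInt (fun x => snd (f x)) a b.

Lemma ex_CRInt_ex_derive (f : R -> C) (a b : R) :
  (forall x, Rmin a b <= x <= Rmax a b ->
     ex_derive (fun x => fst (f x)) x /\ ex_derive (fun x => snd (f x)) x) ->
  ex_CRInt f a b.
Proof.
  intros Hd; split; apply (ex_RInt_continuous (V := R_CompleteNormedModule));
    intros x Hx; apply (ex_derive_continuous (K := R_AbsRing) (V := R_NormedModule));
    apply Hd, Hx.
Qed.

Lemma CRInt_ext (f g : R -> C) (a b : R) :
  (forall x, Rmin a b < x < Rmax a b -> f x = g x) ->
  CRInt f a b = CRInt g a b.
Proof.
  intros Hfg; unfold CRInt; f_equal; apply RInt_ext; intros x Hx; now rewrite Hfg.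
Qed.

Lemma CRInt_Cmult_l (c : C) (f : R -> C) (a b : R) :
  ex_CRInt f a b -> CRInt (fun x => c * f x)%C a b = (c * CRInt f a b)%C.
Proof.
  intros [H1 H2]; unfold CRInt, Cmult; simpl; f_equal;
    apply is_RInt_unique;
    [apply (is_RInt_minus (V := R_NormedModule)) | apply (is_RInt_plus (V := R_NormedModule))];
    apply (is_RInt_scal (V := R_NormedModule)), (RInt_correct (V := R_CompleteNormedModule));
    assumption.
Qed.

Lemma CRInt_comp_lin (f : R -> C) (u v a b : R) :
  ex_CRInt f (u * a + v) (u * b + v) ->
  CRInt (fun y => Cmult (RtoC u) (f (u * y + v))) a b = CRInt f (u * a + v) (u * b + v).
Proof.
  intros [H1 H2]; unfold CRInt; f_equal;
    rewrite <- (RInt_comp_lin (V := R_CompleteNormedModule)) by assumption;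
    apply RInt_ext; intros x _; unfold RtoC, Cmult; simpl; unfold scal; simpl;
    unfold mult; simpl; ring.
Qed.

Lemma Rabs_RInt_sub_le (f g : R -> R) (a b H : R) :
  a <= b -> ex_RInt f a b -> ex_RInt g a b ->
  (forall x, a <= x <= b -> Rabs (f x - g x) <= H) ->
  Rabs (RInt f a b - RInt g a b) <= (b - a) * H.
Proof.
  intros Hab Hf Hg Hb.
  replace (RInt f a b - RInt g a b) with (RInt (fun x => f x - g x) a b)
    by exact (RInt_minus (V := R_CompleteNormedModule) f g a b Hf Hg).
  apply abs_RInt_le_const; [exact Hab | | exact Hb].
  exact (ex_RInt_minus (V := R_NormedModule) f g a b Hf Hg).
Qed.

Lemma Cmod_CRInt_sub_le (f g : R -> C) (a b H : R) :
  a <= b -> ex_CRInt f a b -> ex_CRInt g a b ->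
  (forall x, a <= x <= b -> Cmod (f x - g x) <= H) ->
  Cmod (CRInt f a b - CRInt g a b) <= sqrt 2 * ((b - a) * H).
Proof.
  intros Hab [Hf1 Hf2] [Hg1 Hg2] Hb.
  eapply Rle_trans; [apply Cmod_2Rmax |].
  apply Rmult_le_compat_l; [apply sqrt_pos |].
  apply Rmax_lub; simpl; apply Rabs_RInt_sub_le; auto;
    intros x Hx; apply Rle_trans with (2 := Hb x Hx);
    apply Rle_trans with (2 := Rmax_Cmod _); simpl.
  - apply Rmax_l.
  - apply Rmax_r.
Qed.

Lemma CRInt_fresnel_rescale (Th A0 beta w z0 z1 : R) :
  beta <> 0 ->
  Cmult (cexpi Th)
    (Cmult (RtoC (A0 / beta)) (CRInt (fun xi => cexpi (xi ^ 2)) w (w + beta * (z1 - z0))))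
  = CRInt (fun x => Cmult (RtoC A0) (cexpi (Th + (beta * (x - z0) + w) ^ 2))) z0 z1.
Proof.
  intros Hbeta.
  assert (Hfres : forall a b, ex_CRInt (fun xi => cexpi (xi ^ 2)) a b).
  { intros a b; apply ex_CRInt_ex_derive; intros x _; unfold cexpi; simpl;
      split; auto_derive; auto. }
  replace w with (beta * z0 + (w - beta * z0)) at 1 by ring.
  replace (w + beta * (z1 - z0)) with (beta * z1 + (w - beta * z0)) by ring.
  rewrite <- CRInt_comp_lin by apply Hfres.
  rewrite Cmult_assoc, <- CRInt_Cmult_l.
  2:{ apply ex_CRInt_ex_derive; intros x _; unfold Cmult, RtoC, cexpi; simpl;
        split; auto_derive; auto. }
  apply CRInt_ext; intros x _.
  unfold Cmult, RtoC, cexpi; simpl.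
  replace (beta * x + (w - beta * z0)) with (beta * (x - z0) + w) by ring.
  rewrite cos_plus, sin_plus; f_equal; field; exact Hbeta.
Qed.

Section QuadraticPhase.

Variables (phi dphi d2phi A : R -> R) (t z0 z1 beta w A0 M eta : R).

Hypothesis t_ge0 : 0 <= t.
Hypothesis z0_le_z1 : z0 <= z1.
Hypothesis beta_gt0 : 0 < beta.
Hypothesis beta_sqr : beta ^ 2 = t * d2phi z0 / 2.
Hypothesis beta_w : 2 * beta * w = t * dphi z0.
Hypothesis phi_derive : forall x, z0 <= x <= z1 -> is_derive phi x (dphi x).
Hypothesis dphi_derive : forall x, z0 <= x <= z1 -> is_derive dphi x (d2phi x).
Hypothesis d2phi_lip : forall x, z0 <= x <= z1 -> Rabs (d2phi x - d2phi z0) <= M * (x - z0).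
Hypothesis A_near : forall x, z0 <= x <= z1 -> Rabs (A x - A0) <= eta.
Hypothesis integrable : ex_CRInt (fun x => Cmult (RtoC (A x)) (cexpi (t * phi x))) z0 z1.

Lemma taylor2_complete_square (x : R) :
  t * (phi z0 + dphi z0 * (x - z0) + d2phi z0 * (x - z0) ^ 2 / 2)
  = t * phi z0 - w ^ 2 + (beta * (x - z0) + w) ^ 2.
Proof.
  replace (t * phi z0 - w ^ 2 + (beta * (x - z0) + w) ^ 2)
    with (t * phi z0 + 2 * beta * w * (x - z0) + beta ^ 2 * (x - z0) ^ 2) by ring.
  rewrite beta_sqr, beta_w; field.
Qed.

Lemma phase_sub_quadratic_le (x : R) :
  z0 <= x <= z1 ->
  Rabs (t * phi x - (t * phi z0 - w ^ 2 + (beta * (x - z0) + w) ^ 2))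
    <= t * (M * (z1 - z0) ^ 3).
Proof.
  intros Hx.
  rewrite <- taylor2_complete_square, <- Rmult_minus_distr_l, Rabs_mult, Rabs_pos_eq by lra.
  apply Rmult_le_compat_l; [lra |].
  eapply Rle_trans;
    [exact (taylor2_remainder_le phi dphi d2phi z0 z1 M
              phi_derive dphi_derive d2phi_lip x Hx) |].
  destruct (Rle_lt_or_eq_dec z0 z1 z0_le_z1) as [Hlt | Heq].
  - assert (HM : 0 <= M).
    { pose proof (d2phi_lip z1 (conj z0_le_z1 (Rle_refl z1))).
      pose proof (Rabs_pos (d2phi z1 - d2phi z0)); nra. }
    apply Rmult_le_compat_l; [exact HM | apply pow_incr; lra].
  - replace x with z1 by lra; rewrite Heq; apply Rle_refl.
Qed.

Lemma CRInt_quadratic_phase_approx :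
  Cmod (Cminus
    (CRInt (fun x => Cmult (RtoC (A x)) (cexpi (t * phi x))) z0 z1)
    (Cmult (cexpi (t * phi z0 - w ^ 2))
      (Cmult (RtoC (A0 / beta))
        (CRInt (fun xi => cexpi (xi ^ 2)) w (w + beta * (z1 - z0))))))
  <= sqrt 2 * ((z1 - z0) * (eta + Rabs A0 * (t * (M * (z1 - z0) ^ 3)))).
Proof.
  rewrite CRInt_fresnel_rescale by lra.
  apply Cmod_CRInt_sub_le; [exact z0_le_z1 | exact integrable | |].
  - apply ex_CRInt_ex_derive; intros x _; unfold Cmult, RtoC, cexpi; simpl;
      split; auto_derive; auto.
  - intros x Hx.
    eapply Rle_trans; [apply Cmod_scal_cexpi_sub_le |].
    apply Rplus_le_compat; [now apply A_near |].
    apply Rmult_le_compat_l; [apply Rabs_pos | now apply phase_sub_quadratic_le].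
Qed.

End QuadraticPhase.

Definition dFphase (z lam : R) : R := ln z - ln (1 - z) + ln lam.

Definition d2Fphase (z : R) : R := / z + / (1 - z).

Lemma is_derive_Fphase (lam z : R) :
  0 < lam -> 0 < z < 1 -> is_derive (fun x => Fphase x lam) z (dFphase z lam).
Proof.
  intros Hlam Hz; unfold Fphase, dFphase.
  auto_derive; [repeat split; lra |].
  change (1 + - z) with (1 - z); field; lra.
Qed.

Lemma is_derive_dFphase (lam z : R) :
  0 < z < 1 -> is_derive (fun x => dFphase x lam) z (d2Fphase z).
Proof.
  intros Hz; unfold dFphase, d2Fphase.
  auto_derive; [repeat split; lra |].
  field; lra.
Qed.

(* d2Fphase c - d2Fphase (1 - e) = (c - (1 - e)) * (1 / ((1 - c) e) - 1 / (c (1 - e))),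
   and both fractions lie in (0, 2 / e^2]. *)
Lemma d2Fphase_lip (e c : R) :
  0 < e <= 1 / 2 -> 1 - e <= c <= 1 - e / 2 ->
  Rabs (d2Fphase c - d2Fphase (1 - e)) <= 2 / e ^ 2 * (c - (1 - e)).
Proof.
  intros He Hc; unfold d2Fphase.
  replace (/ c + / (1 - c) - (/ (1 - e) + / (1 - (1 - e))))
    with ((c - (1 - e)) * (/ ((1 - c) * e) - / (c * (1 - e))))
    by (field; repeat split; lra).
  rewrite Rabs_mult, Rabs_pos_eq, Rmult_comm by lra.
  apply Rmult_le_compat_r; [lra |].
  assert (H1 : 0 < / ((1 - c) * e) <= 2 / e ^ 2).
  { split; [apply Rinv_0_lt_compat; nra |].
    replace (2 / e ^ 2) with (/ (e / 2 * e)) by (field; lra).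
    apply Rinv_le_contravar; nra. }
  assert (H2 : 0 < / (c * (1 - e)) <= 2 / e ^ 2).
  { split; [apply Rinv_0_lt_compat; nra |].
    apply Rle_trans with 4.
    - replace 4 with (/ (/ 2 * / 2)) by field.
      apply Rinv_le_contravar; nra.
    - replace (2 / e ^ 2) with (2 * / (e * e)) by (field; lra).
      assert (4 <= / (e * e)).
      { replace 4 with (/ (/ 2 * / 2)) by field. apply Rinv_le_contravar; nra. }
      lra. }
  apply Rabs_le; lra.
Qed.

Lemma Rabs_inv_sqrt_sub_le (e a s : R) :
  0 < e -> 0 < a <= 1 / 2 -> e * (1 - a) <= s <= e ->
  Rabs (/ sqrt s - / sqrt e) <= 2 * a / sqrt e.
Proof.
  intros He Ha Hs.
  assert (Hp : 0 < sqrt s) by (apply sqrt_lt_R0; nra).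
  assert (Hq : 0 < sqrt e) by (apply sqrt_lt_R0; lra).
  pose proof (sqrt_sqrt s ltac:(nra)) as Hp2.
  pose proof (sqrt_sqrt e ltac:(lra)) as Hq2.
  set (p := sqrt s) in *; set (q := sqrt e) in *.
  assert (Hpq : p <= q) by (apply sqrt_le_1; nra).
  assert (Hqp : q <= 2 * p) by nra.
  assert (Hdiff : q - p <= a * q) by nra.
  replace (/ p - / q) with ((q - p) / (p * q)) by (field; lra).
  rewrite Rabs_pos_eq by (apply Rdiv_le_0_compat; nra).
  apply (Rmult_le_reg_r (p * q)); [nra |].
  replace ((q - p) / (p * q) * (p * q)) with (q - p) by (field; lra).
  replace (2 * a / q * (p * q)) with (2 * a * p) by (field; lra).
  nra.
Qed.

Lemma ex_CRInt_J_B1_integrand (t lam z0 z1 : R) :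
  0 < z0 -> z0 <= z1 -> z1 < 1 ->
  ex_CRInt (fun z => Cmult (RtoC (/ sqrt (1 - z))) (cexpi (t * Fphase z lam))) z0 z1.
Proof.
  intros Hz0 Hz01 Hz1; apply ex_CRInt_ex_derive.
  rewrite Rmin_left, Rmax_right by lra.
  intros x Hx; unfold Cmult, RtoC, cexpi, Fphase; simpl.
  split; auto_derive; repeat split; try lra; apply Rgt_not_eq, sqrt_lt_R0; lra.
Qed.

Lemma error_terms_le (t e a : R) :
  0 < e -> 0 < a -> 1 <= t * e * a ^ 2 ->
  sqrt 2 * ((1 - e * (1 - a) - (1 - e))
    * (2 * a / sqrt e + / sqrt e * (t * (2 / e ^ 2 * (1 - e * (1 - a) - (1 - e)) ^ 3))))
  <= 8 * (t * e * sqrt e * a ^ 4).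
Proof.
  intros He Ha Htea.
  assert (Hq : 0 < sqrt e) by (apply sqrt_lt_R0; lra).
  pose proof (sqrt_sqrt e ltac:(lra)) as Hqq.
  assert (Hs2 : sqrt 2 <= 2).
  { pose proof (sqrt_sqrt 2 ltac:(lra)); pose proof (sqrt_pos 2); nra. }
  set (q := sqrt e) in *.
  replace (sqrt 2 * ((1 - e * (1 - a) - (1 - e))
             * (2 * a / q + / q * (t * (2 / e ^ 2 * (1 - e * (1 - a) - (1 - e)) ^ 3)))))
    with (sqrt 2 * (2 * (a ^ 2 * q) + 2 * (t * e * q * a ^ 4)))
    by (rewrite <- Hqq; field; lra).
  assert (Hpos : 0 <= a ^ 2 * q) by (apply Rmult_le_pos; [apply pow2_ge_0 | lra]).
  assert (Hamp : a ^ 2 * q <= t * e * q * a ^ 4).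
  { replace (t * e * q * a ^ 4) with (t * e * a ^ 2 * (a ^ 2 * q)) by ring.
    rewrite <- (Rmult_1_l (a ^ 2 * q)) at 1.
    apply Rmult_le_compat_r; assumption. }
  pose proof (sqrt_pos 2); nra.
Qed.

Section FphaseScaling.

Variables (delta t lam : R).

Let e := Rpower t (delta - 1).
Let beta := sqrt (t * d2Fphase (1 - e) / 2).

Hypothesis t_gt0 : 0 < t.
Hypothesis e_le_half : e <= 1 / 2.
Hypothesis lam_c_le_lam : lam_c delta t <= lam.

Let e_gt0 : 0 < e.
Proof. apply exp_pos. Qed.

Lemma lam_c_eq : lam_c delta t = e / (1 - e).
Proof.
  pose proof e_gt0; unfold lam_c.
  replace (1 - delta) with (- (delta - 1)) by ring.
  rewrite Rpower_Ropp; fold e; field; lra.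
Qed.

Let lam_gt0 : 0 < lam.
Proof.
  pose proof e_gt0; rewrite lam_c_eq in lam_c_le_lam.
  assert (0 < e / (1 - e)) by (apply Rdiv_lt_0_compat; lra); lra.
Qed.

Let d2Fphase_scaled_gt0 : 0 < t * d2Fphase (1 - e) / 2.
Proof.
  pose proof e_gt0; unfold d2Fphase.
  apply Rdiv_lt_0_compat; [| lra].
  apply Rmult_lt_0_compat; [lra |].
  apply Rplus_lt_0_compat; apply Rinv_0_lt_compat; lra.
Qed.

Let beta_gt0 : 0 < beta.
Proof. apply sqrt_lt_R0, d2Fphase_scaled_gt0. Qed.

Let beta_sqr : beta ^ 2 = t * d2Fphase (1 - e) / 2.
Proof. apply pow2_sqrt, Rlt_le, d2Fphase_scaled_gt0. Qed.

Lemma lam_c_scale : sqrt (lam_c delta t * t / 2) = beta * e.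
Proof.
  pose proof e_gt0; pose proof beta_gt0; pose proof beta_sqr as Hb.
  apply sqrt_lem_1; [| nra |].
  - rewrite lam_c_eq; apply Rlt_le, Rdiv_lt_0_compat; [| lra].
    apply Rmult_lt_0_compat; [apply Rdiv_lt_0_compat |]; lra.
  - replace (beta * e * (beta * e)) with (beta ^ 2 * e ^ 2) by ring.
    rewrite Hb, lam_c_eq; unfold d2Fphase; field; lra.
Qed.

Lemma omega_eq : 2 * beta * omega delta t lam = t * dFphase (1 - e) lam.
Proof.
  pose proof e_gt0; pose proof lam_gt0; pose proof beta_sqr as Hb.
  unfold omega, dFphase; rewrite lam_c_scale, lam_c_eq.
  rewrite ln_div, ln_div by (try apply Rdiv_lt_0_compat; lra).
  replace (2 * beta * (beta * e * (ln lam - (ln e - ln (1 - e))) / (1 + e / (1 - e))))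
    with (2 * beta ^ 2 * e * (1 - e) * (ln lam - (ln e - ln (1 - e)))) by (field; lra).
  replace (1 - (1 - e)) with e by ring.
  rewrite Hb; unfold d2Fphase; field; lra.
Qed.

Lemma prefactor_eq :
  Rpower t (-1/2) * sqrt (2 / (1 + lam_c delta t)) = / sqrt e / beta.
Proof.
  pose proof e_gt0; pose proof beta_gt0; pose proof beta_sqr as Hb.
  assert (Hq : 0 < sqrt e) by (apply sqrt_lt_R0; lra).
  apply Rsqr_inj.
  - apply Rmult_le_pos; [apply Rlt_le, exp_pos | apply sqrt_pos].
  - apply Rlt_le, Rdiv_lt_0_compat; [apply Rinv_0_lt_compat |]; lra.
  - replace (-1/2) with (- (/ 2)) by field.
    rewrite Rpower_Ropp, Rpower_sqrt by lra.
    assert (Ht : 0 < sqrt t) by (apply sqrt_lt_R0; lra).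
    assert (HX : 0 <= 2 / (1 + lam_c delta t)).
    { rewrite lam_c_eq; apply Rlt_le, Rdiv_lt_0_compat; [lra |].
      assert (0 < e / (1 - e)) by (apply Rdiv_lt_0_compat; lra); lra. }
    unfold Rsqr.
    replace (/ sqrt t * sqrt (2 / (1 + lam_c delta t)) * (/ sqrt t * sqrt (2 / (1 + lam_c delta t))))
      with (sqrt (2 / (1 + lam_c delta t)) * sqrt (2 / (1 + lam_c delta t)) / (sqrt t * sqrt t))
      by (field; lra).
    replace (/ sqrt e / beta * (/ sqrt e / beta)) with (/ (sqrt e * sqrt e * beta ^ 2))
      by (field; lra).
    rewrite !sqrt_sqrt, Hb, lam_c_eq by lra.
    unfold d2Fphase; replace (1 - (1 - e)) with e by ring.
    field; lra.
Qed.

Lemma Cmod_J_B1_sub_J_main_le (a : R) :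
  0 < a <= 1 / 2 -> 1 <= t * e * a ^ 2 ->
  Cmod (Cminus (J_B1 delta t lam a) (J_main delta t lam a))
    <= 8 * (t * e * sqrt e * a ^ 4).
Proof.
  intros Ha Htea.
  pose proof e_gt0 as He; pose proof lam_gt0 as Hlam.
  assert (Hq : 0 < sqrt e) by (apply sqrt_lt_R0; lra).
  unfold J_B1, J_main; cbv zeta; fold e.
  rewrite prefactor_eq, lam_c_scale.
  replace (a * (beta * e)) with (beta * (1 - e * (1 - a) - (1 - e))) by ring.
  eapply Rle_trans.
  { apply (CRInt_quadratic_phase_approx (fun x => Fphase x lam) (fun x => dFphase x lam)
             d2Fphase (fun x => / sqrt (1 - x)))
      with (M := 2 / e ^ 2) (eta := 2 * a / sqrt e).
    - lra.
    - nra.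
    - exact beta_gt0.
    - exact beta_sqr.
    - exact omega_eq.
    - intros x Hx; apply is_derive_Fphase; [lra | split; nra].
    - intros x Hx; apply is_derive_dFphase; split; nra.
    - intros x Hx; apply d2Fphase_lip; nra.
    - intros x Hx; apply Rabs_inv_sqrt_sub_le; repeat split; lra.
    - apply ex_CRInt_J_B1_integrand; nra. }
  rewrite Rabs_pos_eq by (apply Rlt_le, Rinv_0_lt_compat, Hq).
  apply error_terms_le; lra.
Qed.

End FphaseScaling.

Lemma is_lim_0_eventually_lt (f : R -> R) (eps : R) :
  0 < eps -> is_lim f p_infty 0 -> Rbar_locally p_infty (fun x => Rabs (f x) < eps).
Proof.
  intros Heps Hf; apply (Hf (fun y => Rabs y < eps)).
  exists (mkposreal eps Heps); intros y Hy.
  unfold ball in Hy; simpl in Hy; unfold AbsRing_ball, abs, minus, plus, opp in Hy; simpl in Hy.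
  now rewrite Ropp_0, Rplus_0_r in Hy.
Qed.

Lemma eventually_Rpower_le_half (c : R) :
  0 < c -> Rbar_locally p_infty (fun t => Rpower t (- c) <= 1 / 2).
Proof.
  intros Hc; exists (Rpower 2 (/ c)); intros t Ht.
  assert (H2 : 0 < Rpower 2 (/ c)) by apply exp_pos.
  assert (Htc : 2 <= Rpower t c).
  { rewrite <- (Rpower_1 2) at 1 by lra.
    replace 1 with (/ c * c) by (field; lra).
    rewrite <- Rpower_mult; apply Rle_Rpower_l; lra. }
  rewrite Rpower_Ropp; replace (1 / 2) with (/ 2) by field.
  apply Rinv_le_contravar; lra.
Qed.

Lemma Rpower_main_order (delta t : R) :
  0 < t ->
  Rpower t (-1/2 + 3 * delta / 2)
  = t * Rpower t (delta - 1) * sqrt (Rpower t (delta - 1)).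
Proof.
  intros Ht.
  rewrite <- Rpower_sqrt, Rpower_mult by apply exp_pos.
  rewrite <- (Rpower_1 t) at 2 by exact Ht.
  rewrite <- !Rpower_plus; f_equal; field.
Qed.

Lemma eventually_le_half_of_lim_ratio (delta : R) (a : R -> R) :
  0 < delta ->
  is_lim (fun t => a t / Rpower t (- delta / 3)) p_infty 0 ->
  Rbar_locally p_infty (fun t => a t <= 1 / 2).
Proof.
  intros Hd Hup.
  destruct (is_lim_0_eventually_lt _ (1 / 2) ltac:(lra) Hup) as [M HM].
  exists (Rmax 1 M); intros t Ht.
  specialize (HM t (Rle_lt_trans _ _ _ (Rmax_r 1 M) Ht)).
  assert (Hp : 0 < Rpower t (- delta / 3)) by apply exp_pos.
  assert (Hp1 : Rpower t (- delta / 3) <= 1).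
  { rewrite <- (Rpower_O t) by (pose proof (Rmax_l 1 M); lra).
    apply Rle_Rpower; [pose proof (Rmax_l 1 M) |]; lra. }
  apply Rabs_def2 in HM as [HM _].
  apply (Rmult_lt_compat_r (Rpower t (- delta / 3))) in HM; [| exact Hp].
  unfold Rdiv in HM; rewrite Rmult_assoc, Rinv_l, Rmult_1_r in HM by lra.
  nra.
Qed.

Lemma eventually_one_le_scaled_sqr (delta : R) (a : R -> R) :
  (forall t, 1 < t -> 0 < a t) ->
  is_lim (fun t => Rpower t (- delta / 2) / a t) p_infty 0 ->
  Rbar_locally p_infty (fun t => 1 <= t * Rpower t (delta - 1) * a t ^ 2).
Proof.
  intros Hpos Hlow.
  destruct (is_lim_0_eventually_lt _ 1 Rlt_0_1 Hlow) as [M HM].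
  exists (Rmax 1 M); intros t Ht.
  assert (Ht1 : 1 < t) by (pose proof (Rmax_l 1 M); lra).
  specialize (HM t (Rle_lt_trans _ _ _ (Rmax_r 1 M) Ht)).
  pose proof (Hpos t Ht1) as Ha.
  set (p := Rpower t (- delta / 2)) in HM.
  assert (Hp : 0 < p) by apply exp_pos.
  assert (Hpa : p < a t).
  { apply Rabs_def2 in HM as [HM _].
    apply (Rmult_lt_compat_r (a t)) in HM; [| exact Ha].
    unfold Rdiv in HM; rewrite Rmult_assoc, Rinv_l, Rmult_1_r in HM by lra; lra. }
  assert (Hscale : t * Rpower t (delta - 1) * p ^ 2 = 1).
  { unfold p; rewrite <- (Rpower_1 t) at 1 by lra; simpl.
    rewrite Rmult_1_r, <- !Rpower_plus.
    replace (1 + (delta - 1) + (- delta / 2 + - delta / 2)) with 0 by field.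
    apply Rpower_O; lra. }
  assert (0 < t * Rpower t (delta - 1)) by (apply Rmult_lt_0_compat; [lra | apply exp_pos]).
  rewrite <- Hscale at 1; apply Rmult_le_compat_l; [lra | apply pow_incr; lra].
Qed.

Theorem lemma4p8 (delta : R) (a : R -> R) :
  0 < delta < 1 ->
  (forall t, 1 < t -> 0 < a t) ->
  is_lim (fun t => Rpower t (- delta / 2) / a t) p_infty 0 ->
  is_lim (fun t => a t / Rpower t (- delta / 3)) p_infty 0 ->
  exists C T : R, forall t lam : R,
    T <= t ->
    lam_c delta t <= lam <= Rpower t (1 - delta) - 1 ->
    Cmod (Cminus (J_B1 delta t lam (a t)) (J_main delta t lam (a t)))
      <= C * (Rpower t (-1/2 + 3 * delta / 2) * (a t) ^ 4).
Proof.
  intros Hdelta Hpos Hlow Hup.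
  assert (Hev : Rbar_locally p_infty (fun t =>
            1 < t /\ Rpower t (delta - 1) <= 1 / 2 /\ a t <= 1 / 2
            /\ 1 <= t * Rpower t (delta - 1) * a t ^ 2)).
  { repeat apply filter_and.
    - exists 1; tauto.
    - replace (delta - 1) with (- (1 - delta)) by ring.
      apply eventually_Rpower_le_half; lra.
    - apply (eventually_le_half_of_lim_ratio delta); [lra | exact Hup].
    - exact (eventually_one_le_scaled_sqr delta a Hpos Hlow). }
  destruct Hev as [T HT].
  exists 8, (T + 1); intros t lam Ht Hlam.
  destruct (HT t ltac:(lra)) as (Ht1 & He & Ha & Hscale).
  rewrite Rpower_main_order by lra.
  apply Cmod_J_B1_sub_J_main_le;
    [lra | exact He | apply Hlam | split; [apply Hpos, Ht1 | exact Ha] | exact Hscale].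
Qed.
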